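(* Let $\mathcal{M}, \mathcal{L} \in \mathbb{C}^{n\times n}$ and let the matrix pencil $\mathcal{M}-\lambda \mathcal{L}$ have eigenvalues $\lambda_1,\dots,\lambda_k$ satisfying \[ \mathcal{M}v_1 = \lambda_1 \mathcal{L}v_1 ,\ \dots,\ \mathcal{M}v_k = \lambda_k \mathcal{L}v_k \] for some nonzero vectors $v_1,\dots,v_k\in \mathbb{C}^n$. Let $V= [v_1, \dots ,v_k]\in\mathbb{C}^{n\times k}$, $\Lambda=\mathrm{diag}(\lambda_1,\dots,\lambda_k)$ and $\widehat{\Lambda}=\mathrm{diag}(\hat{\lambda}_1,\dots,\hat{\lambda}_k)\in \mathbb{C}^{k\times k}$ for some $\hat{\lambda}_1,\dots,\hat{\lambda}_k \in \mathbb{C}$. If $R_1, R_2\in \mathbb{C}^{n\times k}$ satisfy \[ R_1^{\top}V =\widehat{\Lambda}-\Lambda \quad\text{and}\quad R_2^{\top}V =0, \] then the eigenvalues of the matrix pencil \[ \widehat{\mathcal{M}}-\lambda \widehat{\mathcal{L}} := (\mathcal{M}+\mathcal{L}VR_1^{\top})-\lambda (\mathcal{L}+\mathcal{M}VR_2^{\top}) \] consist of those of $\mathcal{M}-\lambda \mathcal{L}$, except that the eigenvalues $\lambda_1,\dots,\lambda_k$ of $\mathcal{M}-\lambda \mathcal{L}$ are replaced by $\hat{\lambda}_1,\dots,\hat{\lambda}_k$. Moreover, $\hat{\lambda}_1,\dots,\hat{\lambda}_k$ are eigenvalues of $\widehat{\mathcal{M}}-\lambda\widehat{\mathcal{L}}$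 corresponding to the eigenvectors $v_1,\dots,v_k$, respectively, i.e. $\widehat{\mathcal{M}}v_j=\hat{\lambda}_j\widehat{\mathcal{L}}v_j$ for $j=1,\dots,k$.
   Context: For square matrices $\mathcal{M},\mathcal{L}$, a scalar $\mu$ is an eigenvalue of the pencil $\mathcal{M}-\lambda\mathcal{L}$ if $\det(\mathcal{M}-\mu\mathcal{L})=0$, with a corresponding eigenvector being a nonzero $v$ with $\mathcal{M}v=\mu\mathcal{L}v$; eigenvalues are counted with multiplicity as roots of $\det(\mathcal{M}-\lambda\mathcal{L})$. *)

From HB Require Import structures.
From mathcomp Require Import all_boot all_order all_algebra.
From mathcomp Require Import reals.
From mathcomp Require Export complex.
Set Implicit Arguments. Unset Strict Implicit. Unset Printing Implicit Defensive.
Import Order.TTheory GRing.Theory Num.Theory.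
Local Open Scope ring_scope.

Definition pencil_poly (F : comNzRingType) (n : nat) (M L : 'M[F]_n) : {poly F} :=
  \det (map_mx polyC M - 'X *: map_mx polyC L).

Definition pencil_mult (F : fieldType) (n : nat) (M L : 'M[F]_n) (mu : F) : nat :=
  mup mu (pencil_poly M L).

(* Eigenpairs give M V = L V Lam, so with A = M - x L and D = x I - Lam we have
   A V = -(L V) D, while the update is a rank-k perturbation
   Mh - x Lh = A - (L V) E with E = x Lam R2^T - R1^T.  The block matrix
   [[A, -(L V) D], [-E, D]] is brought to block-triangular form both by a row
   operation and by a column operation (det_addmx_mul), giving
     det (Mh - x Lh) * det (x I - Lam) = det (M - x L) * det (x I - Lam + E V),
   and R1^T V = Lamh - Lam, R2^T V = 0 turn x I - Lam + E V into x I - Lamh.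
   Comparing root multiplicities exchanges the lam_j for the lamh_j; the
   eigenvectors survive because R2^T V = 0 leaves Lh V = L V. *)
From HB Require Import structures.
From mathcomp Require Import all_boot all_order all_algebra.
From mathcomp Require Import reals complex.
Import Order.TTheory GRing.Theory Num.Theory.
Set Implicit Arguments. Unset Strict Implicit. Unset Printing Implicit Defensive.
Local Open Scope ring_scope.

Lemma det_addmx_mul (R : comNzRingType) n k (A : 'M[R]_n) (U W : 'M[R]_(n, k))
    (E : 'M[R]_(k, n)) (D : 'M[R]_k) :
  A *m W = U *m D -> \det (A + U *m E) * \det D = \det A * \det (D + E *m W).
Proof.
move=> AW_UD; set K := block_mx A (U *m D) (- E) D.
have rowK : block_mx 1%:M (- U) 0 1%:M *m K = block_mx (A + U *m E) 0 (- E) D.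
  by rewrite /K mulmx_block !mul1mx !mul0mx !add0r !mulNmx mulmxN opprK subrr.
have colK : K *m block_mx 1%:M (- W) 0 1%:M = block_mx A 0 (- E) (D + E *m W).
  by rewrite /K mulmx_block !mulmx1 !mulmx0 !addr0 !mulmxN AW_UD addNr mulNmx opprK addrC.
move: (congr1 determinant colK) (congr1 determinant rowK).
by rewrite !det_mulmx !det_ublock !det1 !mulr1 !mul1r !det_lblock => <- ->.
Qed.

Lemma col_mul (R : pzSemiRingType) m n p (A : 'M[R]_(m, n)) (B : 'M[R]_(n, p)) j :
  col j (A *m B) = A *m col j B.
Proof. by rewrite !colE mulmxA. Qed.

Lemma eigenpairs_mxP (R : comNzRingType) n k (M L : 'M[R]_n) (V : 'M[R]_(n, k))
    (lam : 'I_k -> R) :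
  reflect (forall j, M *m col j V = lam j *: (L *m col j V))
          (M *m V == L *m V *m diag_mx (\row_j lam j)).
Proof.
apply: (iffP eqP) => [MV j | Mcol].
  by apply/matrixP => i l; rewrite -!col_mul MV mul_mx_diag !mxE mulrC.
apply/matrixP => i j; have /matrixP/(_ i 0) := Mcol j.
by rewrite -!col_mul mul_mx_diag !mxE mulrC.
Qed.

Section PencilUpdate.

Variables (R : comNzRingType) (n k : nat).
Variables (M L : 'M[R]_n) (V R1 R2 : 'M[R]_(n, k)) (Lam Lamh : 'M[R]_k).
Hypothesis MV : M *m V = L *m V *m Lam.
Hypothesis R1V : R1^T *m V = Lamh - Lam.
Hypothesis R2V : R2^T *m V = 0.

Let Mh := M + L *m V *m R1^T.
Let Lh := L + M *m V *m R2^T.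

Lemma pencil_update_eigen : Mh *m V = Lh *m V *m Lamh.
Proof.
have LhV : Lh *m V = L *m V by rewrite mulmxDl -!mulmxA R2V !mulmx0 addr0.
by rewrite LhV mulmxDl MV -[_ *m R1^T *m V]mulmxA R1V mulmxBr addrC subrK.
Qed.

Lemma pencil_poly_update :
  pencil_poly Mh Lh * char_poly Lam = pencil_poly M L * char_poly Lamh.
Proof.
pose P := @polyC R; set A := map_mx P M - 'X *: map_mx P L.
set U := - (map_mx P L *m map_mx P V).
set E := 'X *: (map_mx P Lam *m map_mx P R2^T) - map_mx P R1^T.
have updA : map_mx P Mh - 'X *: map_mx P Lh = A + U *m E.
  rewrite /Mh /Lh MV /A /U /E !map_mxD !map_mxM mulNmx mulmxBr opprB.
  by rewrite !scalemxAr !mulmxA scalerDr opprD addrACA -[in RHS]scalemxAr.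
have AV : A *m map_mx P V = U *m char_poly_mx Lam.
  rewrite /A /U /char_poly_mx mulmxBl -scalemxAl -map_mxM MV !map_mxM.
  by rewrite mulNmx mulmxBr mul_mx_scalar opprB.
have EV : char_poly_mx Lam + E *m map_mx P V = char_poly_mx Lamh.
  rewrite /E /char_poly_mx mulmxBl -scalemxAl -!mulmxA -!map_mxM R2V R1V.
  by rewrite mulmx0 map_mx0 scaler0 sub0r map_mxB opprB addrA subrK.
by rewrite /pencil_poly updA (det_addmx_mul E AV) EV.
Qed.

End PencilUpdate.

Lemma char_poly_diag (R : comNzRingType) k (d : 'I_k -> R) :
  char_poly (diag_mx (\row_j d j)) = \prod_j ('X - (d j)%:P).
Proof. by rewrite char_poly_trig //; apply: eq_bigr => j _; rewrite !mxE eqxx. Qed.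

Lemma mup_prod_XsubC (F : fieldType) (I : finType) (f : I -> F) x :
  mup x (\prod_j ('X - (f j)%:P)) = #|[pred j | f j == x]|.
Proof.
rewrite -(big_map f predT (fun y => 'X - y%:P)) mu_prod_XsubC count_map.
by rewrite -size_filter cardE /enum_mem [index_enum _]unlock.
Qed.

Local Open Scope complex_scope.

Theorem theorem6 (R : realType) (n k : nat) (M L : 'M[R[i]]_n)
  (lam lamh : 'I_k -> R[i]) (V R1 R2 : 'M[R[i]]_(n, k)) :
  (forall j : 'I_k, col j V != 0) ->
  (forall j : 'I_k, M *m col j V = lam j *: (L *m col j V)) ->
  R1^T *m V = diag_mx (\row_j lamh j) - diag_mx (\row_j lam j) ->
  R2^T *m V = 0 ->
  let Mh := M + L *m V *m R1^T in
  let Lh := L + M *m V *m R2^T in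
  [/\ (* the pencil Mh - lambda Lh is singular iff M - lambda L is *)
      (pencil_poly Mh Lh == 0) = (pencil_poly M L == 0),
      (* eigenvalues (with multiplicity): those of M - lambda L with
         lam_1..lam_k removed and lamh_1..lamh_k added *)
      (pencil_poly M L != 0 ->
         forall mu : R[i],
           (pencil_mult Mh Lh mu + #|[pred j | lam j == mu]|)%N =
           (pencil_mult M L mu + #|[pred j | lamh j == mu]|)%N)
    & forall j : 'I_k, Mh *m col j V = lamh j *: (Lh *m col j V)].
Proof.
(* The identities hold for arbitrary columns v_j. *)
move=> _ /eigenpairs_mxP/eqP MV R1V R2V Mh Lh.
have := pencil_poly_update MV R1V R2V; rewrite -/Mh -/Lh !char_poly_diag => key.
have prod_neq0 (d : 'I_k -> R[i]) : \prod_j ('X - (d j)%:P) != 0.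
  by apply/prodf_neq0 => j _; rewrite polyXsubC_eq0.
have singular : (pencil_poly Mh Lh == 0) = (pencil_poly M L == 0).
  rewrite -[LHS]orbF -(negbTE (prod_neq0 lam)) -mulf_eq0 key.
  by rewrite mulf_eq0 (negbTE (prod_neq0 lamh)) orbF.
(* Goals mentioning these determinants are closed by [exact], never by [done],
   which would try to decide them by evaluation. *)
split; first exact singular.
- move=> regular mu.
  have regular_h : pencil_poly Mh Lh != 0 by rewrite singular; exact: regular.
  move: (congr1 (mup mu) key); rewrite (mupM _ regular_h (prod_neq0 lam)).
  by rewrite (mupM _ regular (prod_neq0 lamh)) !mup_prod_XsubC => mup_eq; exact: mup_eq.
- apply/eigenpairs_mxP/eqP; exact: (pencil_update_eigen MV R1V R2V).
Qed.
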